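(* Let $(X,G)$ be a $G$-system with metric $d$ such that $\rho=\mathrm{diam}_d(X)<1$ and the map $d:X\times X\to[0,\rho]$ is surjective. Suppose $\overline{\mathrm{mdim}}_{\mathrm M}(X,G,d)<\infty$. Then the maps $$(\mathcal A^+_d(X),\mathcal W)\to\mathbb R,\ \zeta_d\mapsto\overline{\mathrm{mdim}}_{\mathrm M}(X,G,\zeta_d)\quad\text{and}\quad(\mathcal A^+_d(X),\mathcal W)\to\mathbb R,\ \zeta_d\mapsto\underline{\mathrm{mdim}}_{\mathrm M}(X,G,\zeta_d)$$ are continuous.
   Context: $G$ is a countable discrete amenable group; a $G$-system is a compact metric space with a continuous $G$-action. $\mathcal A[0,\rho]$ is the set of continuous, increasing, subadditive $\zeta:[0,\rho]\to[0,\infty)$ with $\zeta^{-1}(0)=\{0\}$; $k_m(\zeta)=\liminf_{\varepsilon\to0^+}\frac{\log\zeta(\varepsilon)}{\log\varepsilon}$, $k_M(\zeta)=\limsup_{\varepsilon\to0^+}\frac{\log\zeta(\varepsilon)}{\log\varepsilon}$; $\mathcal A^+[0,\rho]=\{\zeta\in\mathcal A[0,\rho]:k_m(\zeta)=k_M(\zeta)>0\}$. For $\zeta\in\mathcal A^+[0,\rho]$ and $\varepsilon>0$ let $\tilde B(\zeta,\varepsilon)=\{\vartheta\in\mathcal A^+[0,\rho]:\zeta(x)(x^\varepsilon-1)<\vartheta(x)-\zeta(x)<\zeta(x)\frac{1-x^\varepsilon}{x^\varepsilon}\text{ for all }x\in(0,\rho]\}$; $\mathcal T$ is the topology on $\mathcal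 A^+[0,\rho]$ having these sets as a subbase. $\zeta_d(x,y)=\zeta(d(x,y))$, and $\mathcal A^+_d(X)=\{\zeta_d:\zeta\in\mathcal A^+[0,\rho]\}$; since $d$ is surjective onto $[0,\rho]$, $\zeta\mapsto\zeta_d$ is a bijection $\mathcal A^+[0,\rho]\to\mathcal A^+_d(X)$, and $\mathcal W$ is the topology on $\mathcal A^+_d(X)$ making this bijection a homeomorphism from $(\mathcal A^+[0,\rho],\mathcal T)$. Metric mean dimensions: for a Følner sequence $(F_n)$ and metric $\rho'$, $\rho'_F(x,y)=\max_{g\in F}\rho'(gx,gy)$, $s_F(\rho',\varepsilon,X)$ the maximal cardinality of a subset whose distinct points have $\rho'_F$-distance $>\varepsilon$; $\overline{\mathrm{mdim}}_{\mathrm M}(X,G,\rho')=\limsup_{\varepsilon\to0}\frac1{|\log\varepsilon|}\limsup_n\frac1{|F_n|}\log s_{F_n}(\rho',\varepsilon,X)$, $\underline{\mathrm{mdim}}_{\mathrm M}$ the same with $\liminf_{\varepsilon\to0}$. *)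

From HB Require Import structures.
From mathcomp Require Import all_boot all_order all_algebra.
From mathcomp Require Import finmap.
From mathcomp Require Import all_classical all_reals all_analysis.
Set Implicit Arguments. Unset Strict Implicit. Unset Printing Implicit Defensive.
Import Order.TTheory GRing.Theory Num.Theory.
Import numFieldNormedType.Exports.
Local Open Scope classical_set_scope.
Local Open Scope ring_scope.


Section Defs.
Variable R : realType.

Definition ltrans (G : groupType) (g : G) (F : {fset G}) : {fset G} :=
  [fset (g * x)%g | x in F]%fset.

Definition Folner (G : groupType) (F : nat -> {fset G}) : Prop :=
  (forall n, F n != fset0) /\
  forall g : G,
    (fun n => (#|` ((ltrans g (F n) `\` F n) `|` (F n `\` ltrans g (F n)))%fset|%:R
               / #|` F n|%:R : R)) @ \oo --> (0 : R).

Definition continuous_action (G : groupType) (X : topologicalType)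
  (act : G -> X -> X) : Prop :=
  (forall x, act 1%g x = x) /\
  (forall g h x, act (g * h)%g x = act g (act h x)) /\
  (forall g, continuous (act g)).

Definition metric_inducing (X : topologicalType) (d : X -> X -> R) : Prop :=
  (forall x y, 0 <= d x y) /\
  (forall x y, d x y = 0 <-> x = y) /\
  (forall x y, d x y = d y x) /\
  (forall x y z, d x z <= d x y + d y z) /\
  (forall x, nbhs x = filter_from [set e : R | 0 < e] (fun e => [set y | d x y < e])).

Definition dynmetric (G : groupType) (X : Type) (act : G -> X -> X)
  (r : X -> X -> R) (F : {fset G}) (x y : X) : R :=
  \big[Num.max/0]_(g <- F) r (act g x) (act g y).

Definition sep_number (G : groupType) (X : choiceType) (act : G -> X -> X)
  (r : X -> X -> R) (F : {fset G}) (eps : R) : \bar R :=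
  ereal_sup [set (#|` S|%:R)%:E | S in
    [set S : {fset X} | forall x y, x \in S -> y \in S -> x != y ->
                          eps < dynmetric act r F x y]].

Definition elog (x : \bar R) : \bar R :=
  match x with
  | r%:E => (ln r)%:E
  | +oo%E => +oo%E
  | -oo%E => -oo%E
  end.

Definition mdim_aux (G : groupType) (X : choiceType) (act : G -> X -> X)
  (F : nat -> {fset G}) (r : X -> X -> R) (eps : R) : \bar R :=
  ((`|ln eps|)^-1)%:E *
  limn_esup (fun n => ((#|` F n|%:R)^-1)%:E * elog (sep_number act r (F n) eps))%E.

Definition umdimM (G : groupType) (X : choiceType) (act : G -> X -> X)
  (F : nat -> {fset G}) (r : X -> X -> R) : \bar R :=
  limf_esup (mdim_aux act F r) (at_right (0 : R)).

Definition lmdimM (G : groupType) (X : choiceType) (act : G -> X -> X)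
  (F : nat -> {fset G}) (r : X -> X -> R) : \bar R :=
  limf_einf (mdim_aux act F r) (at_right (0 : R)).

Definition Aclass (rho : R) (z : R -> R) : Prop :=
  {within `[0, rho], continuous z} /\
  (forall x y, 0 <= x -> x <= y -> y <= rho -> z x <= z y) /\
  (forall x y, 0 <= x -> 0 <= y -> x + y <= rho -> z (x + y) <= z x + z y) /\
  (forall x, 0 <= x <= rho -> 0 <= z x) /\
  (forall x, 0 <= x <= rho -> (z x = 0 <-> x = 0)).

Definition km (z : R -> R) : \bar R :=
  limf_einf (fun e => (ln (z e) / ln e)%:E) (at_right (0 : R)).
Definition kM (z : R -> R) : \bar R :=
  limf_esup (fun e => (ln (z e) / ln e)%:E) (at_right (0 : R)).

Definition Aplus (rho : R) (z : R -> R) : Prop :=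
  Aclass rho z /\ km z = kM z /\ (0 < km z)%E.

Definition Btilde (rho : R) (z : R -> R) (eps : R) : set (R -> R) :=
  [set t | Aplus rho t /\
     forall x, 0 < x <= rho ->
       z x * (x `^ eps - 1) < t x - z x < z x * ((1 - x `^ eps) / x `^ eps)].

(* open sets of the topology T on A^+[0,rho] generated by the subbase
   { B~(z, eps) : z in A^+[0,rho], eps > 0 } : every point of U has a
   neighbourhood which is a finite intersection of subbasic sets
   (the empty intersection being A^+[0,rho] itself) contained in U. *)
Definition T_open (rho : R) (U : set (R -> R)) : Prop :=
  U `<=` Aplus rho /\
  forall z, U z ->
    exists (n : nat) (zs : 'I_n -> R -> R) (es : 'I_n -> R),
      (forall i, Aplus rho (zs i) /\ 0 < es i) /\
      (forall i, Btilde rho (zs i) (es i) z) /\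
      (forall t, Aplus rho t -> (forall i, Btilde rho (zs i) (es i) t) -> U t).

Definition T_continuous (rho : R) (f : (R -> R) -> R) : Prop :=
  forall V : set R, open V -> T_open rho [set z | Aplus rho z /\ V (f z)].

End Defs.

(* Write [k(z)] for the common value of [km z] and [kM z]; subadditivity of [z] gives
   [z x >= c x] near [0], so [k(z)] is finite. Since [z] is increasing and continuous,
   [z o d]-separation at scale [z r] is [d]-separation at scale [r], while
   [|ln (z r)| = (k(z) + o(1)) |ln r|]. Comparing the two metric mean dimension quotients
   along [eps = z r] therefore gives [mdim (z o d) = mdim d / k(z)], for the upper and the
   lower versions alike. On a subbasic set [B~(z, e)] the ratios [ln t x / ln x] stay
   within [e] of [ln z x / ln x], so [|k(t) - k(z)| <= e] and [z |-> 1 / k(z)] is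
   continuous for [T]. If [rho <= 0] then [X] has at most one point and every mean
   dimension vanishes. *)

From HB Require Import structures.
From mathcomp Require Import all_boot all_order all_algebra.
From mathcomp Require Import finmap.
From mathcomp Require Import all_classical all_reals all_analysis.
From mathcomp Require Import lra.
Set Implicit Arguments. Unset Strict Implicit.
Import Order.TTheory GRing.Theory Num.Theory.
Import numFieldNormedType.Exports.
Local Open Scope classical_set_scope.
Local Open Scope ring_scope.

Section LimitsAtZeroRight.
Variable R : realType.
Implicit Types (h : R -> \bar R) (d : R).

Definition right_itv d : set R := [set x | 0 < x < d].

Lemma at_right0P (V : set R) :
  0^'+ V <-> exists2 d, 0 < d & right_itv d `<=` V.
Proof.
split.
- rewrite /at_right /within => /nbhs_ballP [e e0 eV].
  exists e => // x /andP [x0 xe]; apply: eV => //.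
  by rewrite -ball_normE /ball_ /= sub0r normrN gtr0_norm.
- move=> [d d0 dV]; rewrite /at_right /within; apply/nbhs_ballP.
  exists d => // x; rewrite -ball_normE /ball_ /= sub0r normrN => xd x0.
  by apply: dV; rewrite /right_itv /= x0 /= (le_lt_trans (ler_norm x)).
Qed.

Lemma right_itv_at_right0 d : 0 < d -> 0^'+ (right_itv d).
Proof. by move=> d0; apply/at_right0P; exists d. Qed.

Lemma right_itv_half d : 0 < d -> right_itv d (d / 2).
Proof. by move=> d0; rewrite /right_itv /=; apply/andP; split; lra. Qed.

Local Open Scope ereal_scope.

Lemma limf_esup_le_sup h d :
  (0 < d)%R -> limf_esup h 0^'+ <= ereal_sup (h @` right_itv d).
Proof.
move=> d0; rewrite limf_esupE; apply: ereal_inf_lbound.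
by exists (right_itv d) => //; exact: right_itv_at_right0.
Qed.

Lemma limf_esup_ge h c :
  (forall d, (0 < d)%R -> c <= ereal_sup (h @` right_itv d)) ->
  c <= limf_esup h 0^'+.
Proof.
move=> hc; rewrite limf_esupE; apply: le_ereal_inf_tmp => _ [V /at_right0P [d d0 dV] <-].
apply: (le_trans (hc d d0)); apply: ereal_sup_le => _ [x dx <-].
by exists x => //; exact: dV.
Qed.

Lemma limf_einf_ge_inf h d :
  (0 < d)%R -> ereal_inf (h @` right_itv d) <= limf_einf h 0^'+.
Proof.
move=> d0; rewrite limf_einfE; apply: ereal_sup_ubound.
by exists (right_itv d) => //; exact: right_itv_at_right0.
Qed.

Lemma limf_einf_le h c :
  (forall d, (0 < d)%R -> ereal_inf (h @` right_itv d) <= c) ->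
  limf_einf h 0^'+ <= c.
Proof.
move=> hc; rewrite limf_einfE; apply: ge_ereal_sup => _ [V /at_right0P [d d0 dV] <-].
apply: le_trans (hc d d0); apply: ereal_inf_le_tmp => _ [x dx <-].
by exists x => //; exact: dV.
Qed.

Lemma limf_esup_ltP h c : limf_esup h 0^'+ < c ->
  exists2 d, (0 < d)%R & forall x, (0 < x < d)%R -> h x < c.
Proof.
rewrite limf_esupE => /ereal_inf_lt [_ [V /at_right0P [d d0 dV] <-] Vc].
exists d => // x dx; apply: le_lt_trans Vc; apply: ereal_sup_ubound.
by exists x => //; exact: dV.
Qed.

Lemma limf_einf_gtP h c : c < limf_einf h 0^'+ ->
  exists2 d, (0 < d)%R & forall x, (0 < x < d)%R -> c < h x.
Proof.
rewrite limf_einfE => /ereal_sup_gt [_ [V /at_right0P [d d0 dV] <-] Vc].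
exists d => // x dx; apply: lt_le_trans Vc _; apply: ereal_inf_lbound.
by exists x => //; exact: dV.
Qed.

Lemma limf_einf_ge0 h : (forall x, 0 <= h x) -> 0 <= limf_einf h 0^'+.
Proof.
move=> h0; apply: le_trans (limf_einf_ge_inf h ltr01).
by apply: le_ereal_inf_tmp => _ [x _ <-].
Qed.

Lemma limf_einf_le_esup h : limf_einf h 0^'+ <= limf_esup h 0^'+.
Proof.
apply: limf_esup_ge => d2 d2_gt0; apply: limf_einf_le => d1 d1_gt0.
have m_gt0 : (0 < Num.min d1 d2)%R by rewrite lt_min d1_gt0.
have [m0 mm] := andP (right_itv_half m_gt0).
set x := (Num.min d1 d2 / 2)%R in m0 mm *.
apply: (@le_trans _ _ (h x)).
  by apply: ereal_inf_lbound; exists x => //; rewrite /right_itv /= m0 (lt_le_trans mm) // ge_min lexx.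
by apply: ereal_sup_ubound; exists x => //; rewrite /right_itv /= m0 (lt_le_trans mm) // ge_min lexx orbT.
Qed.

(* [0 * +oo = 0] in [\bar R], which is why [0 < L] is needed. *)
Lemma lee_mul_limit (A M : \bar R) (L : R) : (0 < L)%R -> 0 <= M ->
  (forall c, (L < c)%R -> A <= c%:E * M) -> A <= L%:E * M.
Proof.
move=> L0; case: M => [m| |] //= m0 hA.
- rewrite lee_fin in m0.
  apply/lee_addgt0Pr => e e0.
  have m1 : (0 < m + 1)%R by lra.
  have := hA (L + e / (m + 1))%R; rewrite ltrDl divr_gt0 // => /(_ isT) A_le.
  apply: le_trans A_le _; rewrite -EFinD lee_fin mulrDl lerD2l.
  rewrite mulrAC ler_pdivrMr //; nra.
- by rewrite gt0_muley ?lte_fin // leey.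
Qed.

Definition near0_related (Q : R -> R -> Prop) :=
  forall d', (0 < d')%R -> exists2 d, (0 < d)%R &
    forall x, (0 < x < d)%R -> exists2 y, (0 < y < d')%R & Q x y.

Lemma limf_esup_le_scale h1 h2 (L : R) : (0 < L)%R -> (forall x, 0 <= h2 x) ->
  (forall c, (L < c)%R -> near0_related (fun x y => h1 x <= c%:E * h2 y)) ->
  limf_esup h1 0^'+ <= L%:E * limf_esup h2 0^'+.
Proof.
move=> L0 h2_ge0 hQ; apply: lee_mul_limit => //.
  by apply: limf_esup_ge0 => //; exact: filter_not_empty.
move=> c Lc; have c0 : (0 < c)%R by lra.
rewrite -lee_pdivrMl //; apply: limf_esup_ge => d' d'0.
have [d d0 hd] := hQ c Lc d' d'0.
apply: le_trans (lee_wpmul2l _ (limf_esup_le_sup h1 d0)) _.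
  by rewrite lee_fin invr_ge0 ltW.
rewrite lee_pdivrMl //; apply: ge_ereal_sup => _ [x dx <-].
have [y dy h1h2] := hd x dx; apply: le_trans h1h2 _.
by apply: lee_wpmul2l; [rewrite lee_fin ltW | apply: ereal_sup_ubound; exists y].
Qed.

Lemma limf_einf_le_scale h1 h2 (L : R) : (0 < L)%R -> (forall x, 0 <= h1 x) ->
  (forall c, (L < c)%R -> near0_related (fun x y => h2 y <= c%:E * h1 x)) ->
  limf_einf h2 0^'+ <= L%:E * limf_einf h1 0^'+.
Proof.
move=> L0 h1_ge0 hQ; apply: lee_mul_limit => //; first exact: limf_einf_ge0.
move=> c Lc; have c0 : (0 < c)%R by lra.
apply: limf_einf_le => d' d'0.
have [d d0 hd] := hQ c Lc d' d'0.
rewrite -lee_pdivrMl //; apply: le_trans (limf_einf_ge_inf h1 d0).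
apply: le_ereal_inf_tmp => _ [x dx <-]; rewrite lee_pdivrMl //.
have [y dy h2h1] := hd x dx; apply: le_trans h2h1.
by apply: ereal_inf_lbound; exists y.
Qed.

End LimitsAtZeroRight.

Lemma le_limf_esup (R : realType) (T : choiceType) (Y : filteredType T)
    (u v : Y -> \bar R) (F : set_system Y) :
  (forall x, u x <= v x)%E -> (limf_esup u F <= limf_esup v F)%E.
Proof.
move=> uv; rewrite !limf_esupE; apply: le_ereal_inf_tmp => _ [V FV <-].
apply: (@le_trans _ _ (ereal_sup (u @` V))); first by apply: ereal_inf_lbound; exists V.
by apply: ge_ereal_sup => _ [x Vx <-]; apply: le_trans (uv x) _; apply: ereal_sup_ubound; exists x.
Qed.

Lemma bigmax_gt_transfer (R : realType) (I : Type) (s : seq I) (f1 f2 : I -> R) (c1 c2 : R) :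
  0 <= c1 -> (forall i, c1 < f1 i -> c2 < f2 i) ->
  c1 < \big[Num.max/0]_(i <- s) f1 i -> c2 < \big[Num.max/0]_(i <- s) f2 i.
Proof.
move=> c1_ge0 f12; elim: s => [|i s IH]; first by rewrite !big_nil; lra.
by rewrite !big_cons !lt_max => /orP [/f12 ->|/IH ->] //; rewrite orbT.
Qed.

Section SeparationRate.
Variable R : realType.
Variables (G : groupType) (X : choiceType) (act : G -> X -> X) (F : nat -> {fset G}).
Implicit Types (r : X -> X -> R) (Fn : {fset G}).
Local Open Scope ereal_scope.

Definition sep_rate r (eps : R) : \bar R :=
  limn_esup (fun n => ((#|` F n|%:R)^-1)%:E * elog (sep_number act r (F n) eps)).

Lemma mdim_auxE r eps : mdim_aux act F r eps = ((`|ln eps|)^-1)%:E * sep_rate r eps.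
Proof. by []. Qed.

(* [X] may be empty, in which case only the empty set is separated. *)
Lemma sep_number_0_or_ge1 r Fn eps :
  sep_number act r Fn eps = 0 \/ 1 <= sep_number act r Fn eps.
Proof.
set s := sep_number _ _ _ _.
have s_ge0 : 0 <= s.
  apply: ereal_sup_ubound; exists fset0%fset; first by move=> x y; rewrite inE.
  by rewrite cardfs0.
have [s_le0|] := leP s 0; first by left; apply/eqP; rewrite eq_le s_le0 s_ge0.
move=> /ereal_sup_gt [_ [S sepS <-]]; rewrite lte_fin ltr0n => S_gt0.
right; apply: (@le_trans _ _ (#|` S|%:R)%:E); first by rewrite lee_fin ler1n.
by apply: ereal_sup_ubound; exists S.
Qed.

Lemma elog0 : elog (0 : \bar R) = 0.
Proof. by rewrite -[0]/((0:R)%:E) /= ln0. Qed.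

Lemma elog_ge0 (x : \bar R) : x = 0 \/ 1 <= x -> 0 <= elog x.
Proof.
case=> [->|]; first by rewrite elog0.
by case: x => [x| |] //=; rewrite !lee_fin; exact: ln_ge0.
Qed.

Lemma elog_le (x y : \bar R) : x = 0 \/ 1 <= x -> y = 0 \/ 1 <= y ->
  x <= y -> elog x <= elog y.
Proof.
move=> [-> y01 _|x_ge1 y01 xy].
  by rewrite elog0; exact: elog_ge0.
case: x x_ge1 xy => [x| |] //= x_ge1; case: y y01 => [y| |] //= y01; rewrite ?lee_fin //.
- by move=> xy; rewrite lee_fin in x_ge1; rewrite ler_ln ?posrE //; lra.
- by rewrite !leey.
Qed.

Lemma sep_number_le r1 r2 Fn (e1 e2 : R) :
  (forall x y, e1 < dynmetric act r1 Fn x y -> e2 < dynmetric act r2 Fn x y)%R ->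
  sep_number act r1 Fn e1 <= sep_number act r2 Fn e2.
Proof.
move=> r12; apply: ereal_sup_le => _ [S sepS <-]; exists S => //.
by move=> x y xS yS xy; apply: r12; exact: sepS.
Qed.

Lemma sep_rate_ge0 r eps : 0 <= sep_rate r eps.
Proof.
apply: limf_esup_ge0; first exact: filter_not_empty.
move=> n; apply: mule_ge0; first by rewrite lee_fin invr_ge0.
exact/elog_ge0/sep_number_0_or_ge1.
Qed.

Lemma sep_rate_le r1 r2 (e1 e2 : R) : (0 <= e1)%R ->
  (forall x y, e1 < r1 x y -> e2 < r2 x y)%R -> sep_rate r1 e1 <= sep_rate r2 e2.
Proof.
move=> e1_ge0 r12; apply: le_limf_esup => n; apply: lee_wpmul2l.
  by rewrite lee_fin invr_ge0.
apply: elog_le; try exact: sep_number_0_or_ge1.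
apply: sep_number_le => x y; apply: bigmax_gt_transfer => // g; exact: r12.
Qed.

Lemma mdim_aux_ge0 r eps : 0 <= mdim_aux act F r eps.
Proof. by rewrite mdim_auxE mule_ge0 ?sep_rate_ge0 // lee_fin invr_ge0. Qed.

Lemma mdim_aux_le_scale r1 r2 (e1 e2 c : R) :
  (0 < e1 < 1)%R -> (0 < e2 < 1)%R -> (0 < c)%R ->
  sep_rate r1 e1 <= sep_rate r2 e2 -> (- ln e2 <= c * - ln e1)%R ->
  mdim_aux act F r1 e1 <= c%:E * mdim_aux act F r2 e2.
Proof.
move=> e1_01 e2_01 c_gt0 N12 ln12.
have lne1 := ln_lt0 e1_01; have lne2 := ln_lt0 e2_01.
rewrite !mdim_auxE !ltr0_norm // muleA -EFinM.
apply: le_trans (lee_wpmul2l _ N12) _; first by rewrite lee_fin invr_ge0; lra.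
apply: lee_wpmul2r; first exact: sep_rate_ge0.
rewrite lee_fin -[(c * _)%R]/(c / - ln e2)%R ler_pdivlMr; last lra.
by rewrite mulrC ler_pdivrMr //; lra.
Qed.

Lemma mdim_aux_subsingleton r eps :
  (forall x y : X, x = y) -> mdim_aux act F r eps = 0.
Proof.
move=> X_sub; rewrite mdim_auxE.
suff -> : sep_rate r eps = 0 by rewrite mule0.
have sep_le1 n : sep_number act r (F n) eps <= 1.
  apply: ge_ereal_sup => _ [S _ <-]; rewrite lee_fin lern1.
  have [->|[x xS]] := fset_0Vmem S; first by rewrite cardfs0.
  rewrite -(cardfs1 x); apply: fsubset_leq_card; apply/fsubsetP => y _.
  by rewrite (X_sub y x) inE.
rewrite /sep_rate (_ : (fun n => _) = fun=> 0); first exact: (cvg_limn_einf_sup (cvg_cst _)).2.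
apply/funext => n; have [->|s_ge1] := sep_number_0_or_ge1 r (F n) eps.
  by rewrite elog0 mule0.
have -> : sep_number act r (F n) eps = 1 by apply/eqP; rewrite eq_le sep_le1.
by rewrite /= ln1 mule0.
Qed.

End SeparationRate.

Lemma ln_gt_near0 (R : realType) (C : R) : exists2 d, 0 < d & forall r, 0 < r < d -> C < - ln r.
Proof.
exists (expR (- C)); first exact: expR_gt0.
move=> r /andP [r0 rd].
have : ln r < ln (expR (- C)) by rewrite ltr_ln ?posrE ?expR_gt0.
by rewrite expRK; lra.
Qed.

Section Zeta.
Variables (R : realType) (rho : R) (z : R -> R).
Hypotheses (zA : Aclass rho z) (rho_gt0 : 0 < rho).

Lemma zeta_mono x y : 0 <= x -> x <= y -> y <= rho -> z x <= z y.
Proof. by case: zA => _ [mono _]; exact: mono. Qed.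

Lemma zeta_subadd x y : 0 <= x -> 0 <= y -> x + y <= rho -> z (x + y) <= z x + z y.
Proof. by case: zA => _ [_ [subadd _]]; exact: subadd. Qed.

Lemma zeta0 : z 0 = 0.
Proof. by case: zA => _ [_ [_ [_ z_eq0]]]; apply/(z_eq0 0) => //; rewrite lexx ltW. Qed.

Lemma zeta_ge0 x : 0 <= x <= rho -> 0 <= z x.
Proof. by case: zA => _ [_ [_ [z_ge0 _]]]; exact: z_ge0. Qed.

Lemma zeta_gt0 x : 0 < x <= rho -> 0 < z x.
Proof.
case: zA => _ [_ [_ [z_ge0 z_eq0]]] /andP [x0 xr].
have x_itv : 0 <= x <= rho by rewrite ltW.
rewrite lt_neqAle z_ge0 // andbT eq_sym; apply/eqP => /(z_eq0 x x_itv); lra.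
Qed.

Lemma zeta_small e : 0 < e -> exists2 d, 0 < d & forall x, 0 < x < d -> z x < e.
Proof.
move=> e0; case: zA => z_cont _.
have [_ z_cvg0 _] := (continuous_within_itvP _ rho_gt0).1 z_cont.
have [d d0 hd] := (at_right0P _).1 ((cvgrPdist_lt _ _).1 z_cvg0 e e0).
exists d => // x /hd; rewrite zeta0 sub0r normrN.
exact/le_lt_trans/ler_norm.
Qed.

Lemma zeta_ivt D v : 0 < D <= rho -> 0 < v < z D -> exists2 r, 0 < r < D & z r = v.
Proof.
move=> /andP [D0 Dr] /andP [v0 vD]; case: zA => z_cont _.
have zDr := zeta_mono (ltW D0) Dr (lexx rho).
have v_itv : Num.min (z 0) (z rho) <= v <= Num.max (z 0) (z rho).
  by rewrite zeta0 ge_min le_max (ltW v0) (ltW (lt_le_trans vD zDr)) orbT.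
have [r] := IVT (ltW rho_gt0) z_cont v_itv.
rewrite in_itv /= => /andP [r0 rr] zr; exists r => //; apply/andP; split.
- rewrite lt_neqAle r0 andbT eq_sym; apply/eqP => r_eq0.
  by move: zr; rewrite r_eq0 zeta0; lra.
- rewrite ltNge; apply/negP => Dr'.
  by have := zeta_mono (ltW D0) Dr' rr; lra.
Qed.

Lemma zeta_natmul (n : nat) x : 0 <= x -> n%:R * x <= rho -> z (n%:R * x) <= n%:R * z x.
Proof.
move=> x0; elim: n => [|n IH]; first by rewrite !mul0r zeta0.
rewrite -natr1 !mulrDl !mul1r => nxr.
have nx0 : 0 <= n%:R * x by rewrite mulr_ge0.
apply: le_trans (zeta_subadd nx0 x0 nxr) _; rewrite lerD2r; apply: IH; lra.
Qed.

(* Subadditivity makes [z] grow at least linearly near [0]: cover [rho / 2] by copies of [x]. *)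
Lemma zeta_linear_lb x : 0 < x <= rho / 2 -> z (rho / 2) / rho * x <= z x.
Proof.
move=> /andP [x0 xr]; set n := Num.Def.truncn (rho / x).
have rx0 : 0 <= rho / x by rewrite divr_ge0 // ltW.
have /andP [nl nu] := truncn_itv rx0; rewrite -/n in nl nu.
have nxr : n%:R * x <= rho by rewrite -ler_pdivlMr.
have rnx : rho < n%:R * x + x by move: nu; rewrite -natr1 ltr_pdivrMr // mulrDl mul1r.
have z_half_le : z (rho / 2) <= z (n%:R * x) by apply: zeta_mono; lra.
have zx0 : 0 <= z x by apply: zeta_ge0; lra.
have : z (rho / 2) <= rho / x * z x.
  apply: le_trans z_half_le (le_trans (zeta_natmul (ltW x0) nxr) _).
  exact: ler_wpM2r.
rewrite mulrAC ler_pdivlMr // => h.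
by rewrite mulrAC ler_pdivrMr //; lra.
Qed.

Lemma zeta_kM_le2 : (kM z <= 2%:E)%E.
Proof.
have rho0 := rho_gt0.
have zr2 : 0 < z (rho / 2) by apply: zeta_gt0; apply/andP; split; lra.
set c := z (rho / 2) / rho; have c0 : 0 < c by rewrite divr_gt0.
have d0 : 0 < Num.min (Num.min (rho / 2) c) 1 by rewrite !lt_min c0 ltr01 divr_gt0.
apply: le_trans (limf_esup_le_sup _ d0) _; apply: ge_ereal_sup => _ [x + <-].
rewrite /right_itv /= !lt_min => /andP [x0 /andP [/andP [xr xc] x1]]; rewrite lee_fin.
have xxz : x * x <= z x.
  apply: le_trans (zeta_linear_lb _); last by rewrite x0; lra.
  by apply: ler_wpM2r; rewrite -/c; lra.
have lnx : ln x < 0 by apply: ln_lt0; rewrite x0.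
have zx0 : 0 < z x by apply: lt_le_trans xxz; rewrite mulr_gt0.
have : ln (x * x) <= ln (z x) by rewrite ler_ln ?posrE ?mulr_gt0.
by rewrite lnM ?posrE // => h; rewrite ler_ndivrMr //; lra.
Qed.

Lemma zeta_kM_ln_ub k c m : kM z = k%:E -> k < c -> 0 < m ->
  exists2 d, 0 < d & forall r, 0 < r < d -> - ln (z r / m) <= c * - ln r.
Proof.
move=> zkM kc m0; have g0 : 0 < (c - k) / 2 by lra.
have : (kM z < (k + (c - k) / 2)%:E)%E by rewrite zkM lte_fin; lra.
move=> /limf_esup_ltP [d1 d10 ratio_ub].
have [d2 d20 ln_big] := ln_gt_near0 (ln m / ((c - k) / 2)).
exists (Num.min (Num.min d1 d2) (Num.min rho 1)); first by rewrite !lt_min d10 d20 rho_gt0 ltr01.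
move=> r /andP [r0]; rewrite !lt_min => /andP [/andP [rd1 rd2] /andP [rr r1]].
have zr0 : 0 < z r by apply: zeta_gt0; rewrite r0 ltW.
have lnr : ln r < 0 by apply: ln_lt0; rewrite r0.
have /ratio_ub : 0 < r < d1 by rewrite r0.
rewrite lte_fin ltr_ndivrMr // => h1.
have /ln_big : 0 < r < d2 by rewrite r0.
rewrite ltr_pdivrMr // => h2.
by rewrite ln_div ?posrE //; nra.
Qed.

End Zeta.

Lemma km_ln_lb (R : realType) (z : R -> R) k c : km z = k%:E -> c < k ->
  exists2 d, 0 < d & forall r, 0 < r < d -> c * - ln r <= - ln (z r).
Proof.
move=> zkm ck; have : (c%:E < km z)%E by rewrite zkm lte_fin.
move=> /limf_einf_gtP [d d0 ratio_lb].
exists (Num.min d 1); first by rewrite lt_min d0 ltr01.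
move=> r /andP [r0]; rewrite lt_min => /andP [rd r1].
have lnr : ln r < 0 by apply: ln_lt0; rewrite r0.
have /ratio_lb : 0 < r < d by rewrite r0.
by rewrite lte_fin ltr_ndivlMr //; lra.
Qed.

Lemma Aplus_kE (R : realType) (rho : R) z : 0 < rho -> Aplus rho z ->
  exists2 k, 0 < k & km z = k%:E /\ kM z = k%:E.
Proof.
move=> rho0 [zA [km_kM k_gt0]]; have := zeta_kM_le2 zA rho0.
by move: k_gt0; rewrite km_kM; case: (kM z) => [k| |] //= k0 _; exists k.
Qed.

Section MdimComposition.
Variables (R : realType) (G : groupType) (X : choiceType) (act : G -> X -> X).
Variables (F : nat -> {fset G}) (d : X -> X -> R) (rho : R) (z : R -> R).
Hypotheses (d_bound : forall x y, 0 <= d x y <= rho) (zA : Aclass rho z).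
Hypotheses (rho_gt0 : 0 < rho) (rho_lt1 : rho < 1).

Let zd x y := z (d x y).

Lemma sep_rate_comp_le r eps : 0 <= r <= rho -> z r <= eps ->
  (sep_rate act F zd eps <= sep_rate act F d r)%E.
Proof.
move=> /andP [r0 rr] zr; have zr0 : 0 <= z r by apply: (zeta_ge0 zA); rewrite r0.
apply: sep_rate_le => [|x y]; first lra.
rewrite /zd ltNge => /negP dxy; rewrite ltNge; apply/negP => dxy_le.
have := d_bound x y => /andP [dxy0 _].
by apply: dxy; apply: le_trans (zeta_mono zA dxy0 dxy_le rr) zr.
Qed.

Lemma sep_rate_le_comp r eps : 0 <= r -> eps < z r ->
  (sep_rate act F d r <= sep_rate act F zd eps)%E.
Proof.
move=> r0 zr; apply: sep_rate_le => // x y rd.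
have := d_bound x y => /andP [_ dr].
by apply: lt_le_trans zr (zeta_mono zA r0 (ltW rd) dr).
Qed.

Lemma near0_related_preimage (Q : R -> R -> Prop) m : 0 < m ->
  (exists2 d1, 0 < d1 & forall eps r, 0 < eps < 1 -> 0 < r < d1 -> r < rho ->
     z r = m * eps -> Q eps r) ->
  near0_related Q.
Proof.
move=> m0 [d1 d10 hQ] d' d'0; have r0 := rho_gt0.
set D := Num.min (Num.min d' d1) rho.
have D0 : 0 < D by rewrite !lt_min d'0 d10.
have Dr : D <= rho by rewrite ge_min lexx orbT.
have zD0 : 0 < z D by apply: (zeta_gt0 zA); rewrite D0.
exists (Num.min (z D / m) 1); first by rewrite lt_min divr_gt0 // ltr01.
move=> eps /andP [eps0]; rewrite lt_min ltr_pdivlMr // => /andP [epsD eps1].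
have D_itv : 0 < D <= rho by rewrite D0.
have meps : 0 < m * eps < z D by rewrite mulr_gt0 //= mulrC.
have [r /andP [r0' rD] zr] := zeta_ivt zA rho_gt0 D_itv meps.
move: rD; rewrite !lt_min => /andP [/andP [rd' rd1] rr].
by exists r; rewrite ?r0' //; apply: hQ; rewrite ?eps0 ?r0'.
Qed.

Lemma near0_related_image (Q : R -> R -> Prop) m : 1 <= m ->
  (exists2 d1, 0 < d1 & forall r, 0 < r < d1 -> r < rho -> 0 < z r / m < 1 ->
     Q r (z r / m)) ->
  near0_related Q.
Proof.
move=> m1 [d1 d10 hQ] d' d'0; have r0 := rho_gt0.
have e0 : 0 < Num.min (m * d') 1 by rewrite lt_min ltr01 andbT mulr_gt0 //; lra.
have [d2 d20 z_small] := zeta_small zA rho_gt0 e0.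
exists (Num.min (Num.min d1 d2) rho); first by rewrite !lt_min d10 d20.
move=> r /andP [r0']; rewrite !lt_min => /andP [/andP [rd1 rd2] rr].
have zr0 : 0 < z r by apply: (zeta_gt0 zA); rewrite r0' ltW.
have /z_small : 0 < r < d2 by rewrite r0'.
rewrite lt_min => /andP [zrd' zr1].
have zrm0 : 0 < z r / m by rewrite divr_gt0 //; lra.
have zrm1 : z r / m < 1.
  by apply: le_lt_trans zr1; rewrite ler_pdivrMr; [nra | lra].
exists (z r / m); first by rewrite zrm0 /= ltr_pdivrMr; [rewrite mulrC | lra].
by apply: hQ; rewrite ?r0' ?zrm0.
Qed.

Local Notation a := (mdim_aux act F zd).
Local Notation b := (mdim_aux act F d).

Lemma mdim_aux_comp_le c r : 0 < c -> 0 < r < rho -> z r < 1 ->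
  - ln r <= c * - ln (z r) -> (a (z r) <= c%:E * b r)%E.
Proof.
move=> c0 /andP [r0 rr] zr1 ln_rz; have r1 := rho_lt1.
have zr0 : 0 < z r by apply: (zeta_gt0 zA); rewrite r0 ltW.
apply: mdim_aux_le_scale => //; rewrite ?zr0 ?r0 //=; first lra.
by apply: sep_rate_comp_le; rewrite // (ltW r0) (ltW rr).
Qed.

Lemma mdim_aux_le_comp c r : 0 < c -> 0 < r < rho -> z r < 2 ->
  - ln (z r / 2) <= c * - ln r -> (b r <= c%:E * a (z r / 2))%E.
Proof.
move=> c0 /andP [r0 rr] zr2 ln_zr; have r1 := rho_lt1.
have zr0 : 0 < z r by apply: (zeta_gt0 zA); rewrite r0 ltW.
apply: mdim_aux_le_scale => //; rewrite ?r0 /=; [lra | apply/andP; split; lra |].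
by apply: sep_rate_le_comp; [exact: ltW | lra].
Qed.

Lemma umdim_comp_le k : km z = k%:E -> 0 < k ->
  (umdimM act F zd <= (k^-1)%:E * umdimM act F d)%E.
Proof.
move=> zkm k0; apply: limf_esup_le_scale; [by rewrite invr_gt0 | exact: mdim_aux_ge0 |].
move=> c kc; have c0 : 0 < c by apply: lt_trans kc; rewrite invr_gt0.
have ck : c^-1 < k by rewrite -[k]invrK ltf_pV2 ?posrE ?invr_gt0.
have [d1 d10 ln_lb] := km_ln_lb zkm ck.
apply: (@near0_related_preimage _ 1 ltr01); exists d1 => // eps r eps01 rd1 rr.
rewrite mul1r => zr; subst eps; have /andP [r0 _] := rd1.
apply: mdim_aux_comp_le; rewrite ?r0 //; first by case/andP: eps01.
by have := ler_wpM2l (ltW c0) (ln_lb r rd1); rewrite mulrA mulfV ?gt_eqF // mul1r.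
Qed.

Lemma lmdim_comp_le k : km z = k%:E -> 0 < k ->
  (lmdimM act F zd <= (k^-1)%:E * lmdimM act F d)%E.
Proof.
move=> zkm k0; apply: limf_einf_le_scale; [by rewrite invr_gt0 | exact: mdim_aux_ge0 |].
move=> c kc; have c0 : 0 < c by apply: lt_trans kc; rewrite invr_gt0.
have ck : c^-1 < k by rewrite -[k]invrK ltf_pV2 ?posrE ?invr_gt0.
have [d1 d10 ln_lb] := km_ln_lb zkm ck.
apply: (@near0_related_image _ 1 (lexx 1)); exists d1 => // r rd1 rr.
rewrite divr1 => /andP [_ zr1]; have /andP [r0 _] := rd1.
apply: mdim_aux_comp_le; rewrite ?r0 //.
by have := ler_wpM2l (ltW c0) (ln_lb r rd1); rewrite mulrA mulfV ?gt_eqF // mul1r.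
Qed.

Lemma umdim_le_comp k : kM z = k%:E -> 0 < k ->
  (umdimM act F d <= k%:E * umdimM act F zd)%E.
Proof.
move=> zkM k0; apply: limf_esup_le_scale; [by [] | exact: mdim_aux_ge0 |].
move=> c kc; have c0 : 0 < c by apply: lt_trans kc.
have [d1 d10 ln_ub] := zeta_kM_ln_ub zA rho_gt0 zkM kc (ltr0n _ 2).
apply: (@near0_related_image _ 2); first by rewrite ler1n.
exists d1 => // r rd1 rr /andP [_ zr2]; have /andP [r0 _] := rd1.
apply: mdim_aux_le_comp; rewrite ?r0 //; last exact: ln_ub.
by move: zr2; rewrite ltr_pdivrMr // mul1r.
Qed.

Lemma lmdim_le_comp k : kM z = k%:E -> 0 < k ->
  (lmdimM act F d <= k%:E * lmdimM act F zd)%E.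
Proof.
move=> zkM k0; apply: limf_einf_le_scale; [by [] | exact: mdim_aux_ge0 |].
move=> c kc; have c0 : 0 < c by apply: lt_trans kc.
have [d1 d10 ln_ub] := zeta_kM_ln_ub zA rho_gt0 zkM kc (ltr0n _ 2).
apply: (@near0_related_preimage _ 2); first by [].
exists d1 => // eps r /andP [_ eps1] rd1 rr zr; have /andP [r0 _] := rd1.
have -> : eps = z r / 2 by rewrite zr; lra.
apply: mdim_aux_le_comp; rewrite ?r0 //; last exact: ln_ub.
by rewrite zr; lra.
Qed.

Lemma mdim_comp k : km z = k%:E -> kM z = k%:E -> 0 < k ->
  umdimM act F zd = ((k^-1)%:E * umdimM act F d)%E /\
  lmdimM act F zd = ((k^-1)%:E * lmdimM act F d)%E.
Proof.
move=> zkm zkM k0; split; apply/eqP; rewrite eq_le.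
- by rewrite umdim_comp_le //= lee_pdivrMl // umdim_le_comp.
- by rewrite lmdim_comp_le //= lee_pdivrMl // lmdim_le_comp.
Qed.

End MdimComposition.

Lemma powR_in01 (R : realType) (x e : R) : 0 < x < 1 -> 0 < e -> 0 < x `^ e < 1.
Proof.
move=> /andP [x0 x1] e0; rewrite powR_gt0 //=.
have lnx : ln x < 0 by apply: ln_lt0; rewrite x0.
by rewrite -ltr_ln ?posrE ?powR_gt0 // ln_powR ln1; nra.
Qed.

Section TopologyT.
Variables (R : realType) (rho : R).
Hypotheses (rho_gt0 : 0 < rho) (rho_lt1 : rho < 1).

Lemma Btilde_center z e : Aplus rho z -> 0 < e -> Btilde rho z e z.
Proof.
move=> zA e0; split => // x /[dup] x_itv /andP [x0 xr]; have r1 := rho_lt1.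
have /andP [p0 p1] : 0 < x `^ e < 1 by apply: powR_in01; rewrite ?x0 //; lra.
have zx := zeta_gt0 zA.1 x_itv.
by rewrite subrr pmulr_rlt0 // pmulr_rgt0 // divr_gt0 ?subr_gt0 // ?p1 ?p0; lra.
Qed.

(* The defining inequalities say [z x * x `^ e < t x < z x / x `^ e]; take logarithms
   and divide by [ln x < 0]. *)
Lemma Btilde_log_ratio z t e x : Aclass rho z -> 0 < e -> Btilde rho z e t -> 0 < x <= rho ->
  ln (z x) / ln x - e < ln (t x) / ln x < ln (z x) / ln x + e.
Proof.
move=> zA e0 [tA zt] x_itv; have /andP [h1 h2] := zt x x_itv.
have r1 := rho_lt1; have /andP [x0 xr] := x_itv.
have /andP [p0 p1] : 0 < x `^ e < 1 by apply: powR_in01; rewrite ?x0 //; lra.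
set p := x `^ e in h1 h2 p0 p1.
have zx := zeta_gt0 zA x_itv; have tx := zeta_gt0 tA.1 x_itv.
have lnx : ln x < 0 by apply: ln_lt0; rewrite x0; lra.
have lnp : ln p = e * ln x by rewrite ln_powR.
have zp_t : z x * p < t x by nra.
have tp_z : t x * p < z x by move: h2; rewrite mulrA ltr_pdivlMr //; nra.
have l1 : ln (z x) + e * ln x < ln (t x).
  by rewrite -lnp -lnM ?posrE // ltr_ln ?posrE // mulr_gt0.
have l2 : ln (t x) + e * ln x < ln (z x).
  by rewrite -lnp -lnM ?posrE // ltr_ln ?posrE // mulr_gt0.
have ratio_z : ln (z x) / ln x * ln x = ln (z x) by rewrite divfK // lt_eqF.
apply/andP; split.
- by rewrite ltr_ndivlMr // mulrBl ratio_z; nra.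
- by rewrite ltr_ndivrMr // mulrDl ratio_z; nra.
Qed.

Lemma Btilde_k_close z t e kz kt : Aplus rho z -> 0 < e -> Btilde rho z e t ->
  km z = kz%:E -> kM z = kz%:E -> km t = kt%:E -> kM t = kt%:E -> `|kz - kt| <= e.
Proof.
move=> zA e0 zt zkm zkM tkm tkM; have r0 := rho_gt0.
have ratio_close x (d : R) : 0 < x < Num.min d rho ->
    [/\ 0 < x < d, ln (z x) / ln x - e < ln (t x) / ln x & ln (t x) / ln x < ln (z x) / ln x + e].
  move=> /andP [x0]; rewrite lt_min => /andP [xd xr].
  have x_itv : 0 < x <= rho by rewrite x0 ltW.
  have /andP [lo hi] := Btilde_log_ratio zA.1 e0 zt x_itv.
  by split => //; rewrite x0.
have kt_ub : kt <= kz + e.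
  apply/ler_addgt0Pr => g g0.
  have /limf_esup_ltP [d d0 z_ub] : (kM z < (kz + g)%:E)%E by rewrite zkM lte_fin ltrDl.
  have m0 : 0 < Num.min d rho by rewrite lt_min d0.
  rewrite -lee_fin -tkM; apply: le_trans (limf_esup_le_sup _ m0) _.
  apply: ge_ereal_sup => _ [x /ratio_close [xd _ hi] <-]; rewrite lee_fin.
  by have := z_ub x xd; rewrite lte_fin; lra.
have kt_lb : kz - e <= kt.
  apply/ler_addgt0Pr => g g0.
  have /limf_einf_gtP [d d0 z_lb] : ((kz - g)%:E < km z)%E by rewrite zkm lte_fin gtrBl.
  have m0 : 0 < Num.min d rho by rewrite lt_min d0.
  rewrite -lerBlDr -lee_fin -tkm; apply: le_trans (limf_einf_ge_inf _ m0).
  apply: le_ereal_inf_tmp => _ [x /ratio_close [xd lo _] <-]; rewrite lee_fin.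
  by have := z_lb x xd; rewrite lte_fin; lra.
by rewrite ler_norml; apply/andP; split; lra.
Qed.

Lemma T_continuous_div_k (c : R) (f : (R -> R) -> R) :
  (forall z, Aplus rho z -> f z = c / fine (km z)) -> T_continuous rho f.
Proof.
move=> fE V V_open; split; first by move=> z [].
move=> z [zA Vfz]; have [kz kz0 [zkm zkM]] := Aplus_kE rho_gt0 zA.
rewrite fE // zkm /= in Vfz.
have [e e0 e_ball] := (nbhs_ballP _ _).1 (open_nbhs_nbhs (conj V_open Vfz)).
have div_cvg : (fun y : R => c / y) @ kz --> c / kz.
  by apply: cvgM; [exact: cvg_cst | apply: cvgV; [rewrite gt_eqF | exact: cvg_id]].
have [eta eta0 eta_ball] := (nbhs_ballP _ _).1 ((cvgrPdist_lt _ _).1 div_cvg e e0).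
have eta2 : 0 < eta / 2 by rewrite divr_gt0.
exists 1%N, (fun _ => z), (fun _ => eta / 2).
split; [by [] | split; first by move=> i; exact: Btilde_center].
move=> t tA zt; split => //; have [kt kt0 [tkm tkM]] := Aplus_kE rho_gt0 tA.
have := Btilde_k_close zA eta2 (zt ord0) zkm zkM tkm tkM.
rewrite fE // tkm /= => k_close; apply: e_ball.
by rewrite -ball_normE /ball_ /=; apply: eta_ball; rewrite -ball_normE /ball_ /=; lra.
Qed.

End TopologyT.

Lemma T_continuous_cst (R : realType) (rho c : R) (f : (R -> R) -> R) :
  (forall z, Aplus rho z -> f z = c) -> T_continuous rho f.
Proof.
move=> fE V V_open; split; first by move=> z [].
move=> z [zA Vfz]; exists 0%N, (fun _ => z), (fun _ => 1).
split; [by case | split; first by case].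
by move=> t tA _; split => //; rewrite fE // -(fE z zA).
Qed.

Section Continuity.
Variables (R : realType) (G : groupType) (X : choiceType).
Variables (act : G -> X -> X) (F : nat -> {fset G}) (d : X -> X -> R) (rho : R).
Implicit Types r : X -> X -> R.

Let mdims_fin_continuous :=
  (forall z, Aplus rho z ->
     umdimM act F (fun x y => z (d x y)) \is a fin_num /\
     lmdimM act F (fun x y => z (d x y)) \is a fin_num) /\
  T_continuous rho (fun z => fine (umdimM act F (fun x y => z (d x y)))) /\
  T_continuous rho (fun z => fine (lmdimM act F (fun x y => z (d x y)))).

Lemma umdimM_ge0 r : (0 <= umdimM act F r)%E.
Proof. by apply: limf_esup_ge0; [exact: filter_not_empty | exact: mdim_aux_ge0]. Qed.

Lemma lmdimM_ge0 r : (0 <= lmdimM act F r)%E.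
Proof. by apply: limf_einf_ge0; exact: mdim_aux_ge0. Qed.

Lemma mdims_comp_continuous : (forall x y, 0 <= d x y <= rho) -> 0 < rho -> rho < 1 ->
  (umdimM act F d < +oo)%E -> mdims_fin_continuous.
Proof.
move=> d_bound rho_gt0 rho_lt1 umdim_fin.
have [u uE] : exists u, umdimM act F d = u%:E.
  by move: (umdimM_ge0 d) umdim_fin; case: (umdimM act F d) => [u| |] // _ _; exists u.
have [l lE] : exists l, lmdimM act F d = l%:E.
  move: (lmdimM_ge0 d) (limf_einf_le_esup (mdim_aux act F d)).
  by rewrite -/(umdimM act F d) -/(lmdimM act F d) uE; case: (lmdimM act F d) => [l| |] // _ _; exists l.
have compE z : Aplus rho z -> exists2 k, 0 < k & [/\ km z = k%:E,
    umdimM act F (fun x y => z (d x y)) = (k^-1 * u)%:E &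
    lmdimM act F (fun x y => z (d x y)) = (k^-1 * l)%:E].
  move=> zA; have [k k0 [zkm zkM]] := Aplus_kE rho_gt0 zA.
  have [-> ->] := mdim_comp act F d_bound zA.1 rho_gt0 rho_lt1 zkm zkM k0.
  by exists k; rewrite ?uE ?lE.
split; [|split].
- by move=> z /compE [k _ [_ -> ->]].
- apply: (T_continuous_div_k rho_gt0 rho_lt1 (c := u)) => z /compE [k _ [-> -> _]].
  by rewrite /= mulrC.
- apply: (T_continuous_div_k rho_gt0 rho_lt1 (c := l)) => z /compE [k _ [-> _ ->]].
  by rewrite /= mulrC.
Qed.

Lemma mdims_subsingleton_continuous : (forall x y : X, x = y) -> mdims_fin_continuous.
Proof.
move=> X_sub; have aux0 r : mdim_aux act F r = fun=> 0%E.
  by apply/funext => eps; exact: mdim_aux_subsingleton.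
have umdim0 r : umdimM act F r = 0%E.
  apply/eqP; rewrite eq_le umdimM_ge0 andbT /umdimM aux0.
  by apply: le_trans (limf_esup_le_sup _ ltr01) _; apply: ge_ereal_sup => _ [x _ <-].
have lmdim0 r : lmdimM act F r = 0%E.
  apply/eqP; rewrite eq_le lmdimM_ge0 andbT -(umdim0 r).
  exact: limf_einf_le_esup.
split; [|split].
- by move=> z _; rewrite umdim0 lmdim0.
- by apply: (T_continuous_cst (c := 0)) => z _; rewrite umdim0.
- by apply: (T_continuous_cst (c := 0)) => z _; rewrite lmdim0.
Qed.

End Continuity.

Theorem mainTheorem16 (R : realType) (G : groupType) (X : topologicalType)
  (act : G -> X -> X) (F : nat -> {fset G}) (d : X -> X -> R) (rho : R) :
  countable [set: G] ->
  Folner R F ->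
  continuous_action act ->
  metric_inducing d ->
  compact [set: X] ->
  range (fun p : X * X => d p.1 p.2) = [set r : R | 0 <= r <= rho] ->
  rho < 1 ->
  (umdimM act F d < +oo)%E ->
  (forall z, Aplus rho z ->
     umdimM act F (fun x y => z (d x y)) \is a fin_num /\
     lmdimM act F (fun x y => z (d x y)) \is a fin_num) /\
  T_continuous rho (fun z => fine (umdimM act F (fun x y => z (d x y)))) /\
  T_continuous rho (fun z => fine (lmdimM act F (fun x y => z (d x y)))).
Proof.
(* The scaling identity only uses the separated-set counts along [F]. *)
move=> _ _ _ [_ [d_eq0 _]] _ d_range rho_lt1 umdim_fin.
have d_bound x y : 0 <= d x y <= rho.
  have : range (fun p : X * X => d p.1 p.2) (d x y) by exists (x, y).
  by rewrite d_range.
have [rho_gt0|rho_le0] := ltrP 0 rho.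
  exact: mdims_comp_continuous.
apply: mdims_subsingleton_continuous => x y; apply/d_eq0.
by have := d_bound x y; lra.
Qed.
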